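(* For every $t=0,1,\dots,T-1$, the functions $\omega_t$ and $\bar\omega_t$ are nondecreasing on $\mathbb R$.
   Context: Model. Fix an integer horizon $T\ge 2$, a discount factor $\alpha\in(0,1]$, and for $t=0,\dots,T-1$: unit ordering costs $c_t\in\mathbb R$, a salvage coefficient $c_T\in\mathbb R$, setup costs $K_t\ge 0$, functions $G_t:\mathbb R\to\mathbb R$, and independent nonnegative random demands $D_0,\dots,D_{T-1}$ with right-continuous distribution functions $F_t$ and finite means; all expectations appearing are assumed finite. Put $C_t(y)=(c_t-\alpha c_{t+1})y+G_t(y)+\alpha c_{t+1}E[D_t]$. Standing assumptions: (i) each $C_t$ is convex with $C_t(y)\to+\infty$ as $|y|\to\infty$; (ii) $K_t\ge \alpha K_{t+1}$ for $t=0,\dots,T-2$; (iii) there are constants $\gamma_t\ge 0$ with $|C_t(x)-C_t(y)|\le\gamma_t|x-y|$ for all $x,y$. Grid construction. Fix $\theta>0$, $z_m=m\theta$, $Z_\theta=\{z_m:m\in\mathbb Z\}$, $f_t(n)=F_t(z_{n+1})-F_t(z_n)$ ($n\ge -1$). $C^m_t=\min\{y: C_t(y)=\min_x C_t(x)\}$; with $z_{n_0}<C^m_t\le z_{n_0+1}$, $S^U_t=\min\{z_m\in Z_\theta: z_m\ge C^m_t,\ C_t(z_m)>C_t(z_{n_0})+K_t\}$. $s_{T-1}$ is a point with $s_{T-1}\le C^m_{T-1}$, $C_{T-1}(s_{T-1})=C_{T-1}(C^m_{T-1})+K_{T-1}$; $\bar I_{T-1}=s_{T-1}$. For $t=T-2,\dots,0$: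 $I_t=\max\{z_m\in Z_\theta: z_m<\min(\bar I_{t+1}-\theta,C^m_t)\}$, $\bar I_t=\max\{z_m\in Z_\theta: z_m\le I_t,\ C_t(z_m)>C_t(I_t)+K_t\}+\theta$. $H_{T-1}=C_{T-1}$, $S_{T-1}=C^m_{T-1}$; $V_t(y)=H_t(S_t)+K_t$ for $y<s_t$, $V_t(y)=H_t(y)$ for $y\ge s_t$. For $t=T-2,\dots,0$: $H_t(y)=C_t(y)+\alpha\sum_{n=-1}^\infty V_{t+1}(y-z_n)f_t(n)$; $S_t=\max\{z_m\in Z_\theta: I_t\le z_m\le S^U_t,\ H_t(z_m)=\min\{H_t(z_n):z_n\in Z_\theta, I_t\le z_n\le S^U_t\}\}$; $s_t=S_t$ if $K_t=0$, else $s_t=\min\{z_m\in Z_\theta:\bar I_t\le z_m\le S_t,\ H_t(z_m)\le H_t(S_t)+K_t\}$. Estimate functions. $\psi_{T-1}(x,y)=\bar\psi_{T-1}(x,y)=\gamma_{T-1}x$; $\varphi_{T-1}(x,y)=\bar\varphi_{T-1}(x,y)=0$ if $y<s_{T-1}$ and $=\gamma_{T-1}x$ if $y\ge s_{T-1}$. For $t=0,\dots,T-2$, with $n$ the integer such that $z_{n-1}\le y-s_{t+1}<z_n$: $\psi_t(x,y)=\gamma_tx$ if $y<s_{t+1}-\theta$, else $\psi_t(x,y)=\gamma_tx+\alpha\sum_{m=-1}^{n-1}\varphi_{t+1}(x,y-z_m)f_t(m)$; $\varphi_t(x,y)=0$ if $y<s_t$, $=\psi_t(y-s_t,y)$ if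 $y\ge s_t$ and $y-x<s_t$, $=\psi_t(x,y)$ if $y\ge s_t$ and $y-x\ge s_t$. Likewise $\bar\psi_t(x,y)=\gamma_tx$ if $y<s_{t+1}-\theta$, else $\bar\psi_t(x,y)=\gamma_tx+\alpha\sum_{m=-1}^{n-1}\bar\varphi_{t+1}(x,y-z_m)f_t(m)$; $\bar\varphi_t(x,y)=0$ if $y<s_t$, $=\bar\psi_t(y-s_t+\theta,y)$ if $y\ge s_t$ and $y-x<s_t$, $=\bar\psi_t(x,y)$ if $y\ge s_t$ and $y-x\ge s_t$. Error-bound functions. $\omega_{T-1}\equiv\bar\omega_{T-1}\equiv 0$, $\eta_{T-1}=0$. For $t=T-2,\dots,0$: $\omega_t(x)=\psi_t(\theta,x)-\gamma_t\theta+\alpha\sum_{n=-1}^\infty\bar\omega_{t+1}(x-z_n)f_t(n)$; $\eta_t=\bar\psi_t(\theta,S^U_t)+\omega_t(S^U_t)$; $\bar\omega_t(x)=\eta_t$ if $x\le S^U_t$ and $\bar\omega_t(x)=\max(\eta_t,\omega_t(x))$ if $x>S^U_t$. *)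

From Stdlib Require Import Reals ZArith.
From Coquelicot Require Import Coquelicot.
Open Scope R_scope.

Definition zg (theta : R) (m : Z) : R := IZR m * theta.

Definition on_grid (theta x : R) : Prop := exists m : Z, x = zg theta m.

Definition is_least (P : R -> Prop) (x : R) : Prop := P x /\ forall y, P y -> x <= y.
Definition is_greatest (P : R -> Prop) (x : R) : Prop := P x /\ forall y, P y -> y <= x.

Definition fprob (theta : R) (F : R -> R) (n : Z) : R :=
  F (zg theta (n + 1)) - F (zg theta n).

(* sum_{n=-1}^{oo} g(n) f_t(n), indexing n = k - 1 with k : nat *)
Definition gsum_seq (theta : R) (F : R -> R) (g : Z -> R) : nat -> R :=
  fun k => g (Z.of_nat k - 1)%Z * fprob theta F (Z.of_nat k - 1)%Z.

Definition is_cdf_nonneg (F : R -> R) : Prop :=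
  (forall x y, x <= y -> F x <= F y) /\
  (forall x, filterlim F (at_right x) (locally (F x))) /\
  (forall x, x < 0 -> F x = 0) /\
  filterlim F (Rbar_locally p_infty) (locally 1).

Definition Cfun (alpha : R) (c : nat -> R) (G : nat -> R -> R) (ED : nat -> R)
  (t : nat) (y : R) : R :=
  (c t - alpha * c (t + 1)%nat) * y + G t y + alpha * c (t + 1)%nat * ED t.

Definition convex_fun (g : R -> R) : Prop :=
  forall x y l, 0 <= l <= 1 -> g (l * x + (1 - l) * y) <= l * g x + (1 - l) * g y.

From Stdlib Require Import Reals ZArith Lia Lra.
From Coquelicot Require Import Coquelicot.
Open Scope R_scope.

(* The recursion defining omega_t involves the estimate function psi_t
   (evaluated at x = theta) and the expectation of omegab_{t+1} under the
   discretised demand; omegab_t is a clipped maximum of omega_t.  So the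
   proof has two backward inductions on t:
   1. psi_t and phi_t are nonnegative and nondecreasing in both arguments
      (for nonnegative first argument): psi_t is gamma_t x plus a partial
      sum of the series of phi_{t+1}, with more terms as y grows, and
      phi_t is psi_t with its first argument clipped to min(x, y - s_t).
   2. omega_t and omegab_t are nondecreasing: the expectation of a
      nondecreasing function against the nonnegative weights f_t(n) is
      nondecreasing, and the clipping defining omegab_t preserves
      monotonicity. *)

Definition nondecreasing (f : R -> R) : Prop := forall x y, x <= y -> f x <= f y.

Definition mono2_nonneg (f : R -> R -> R) : Prop :=
  forall x x' y y', 0 <= x <= x' -> y <= y' -> 0 <= f x y <= f x' y'.

Lemma backward_induction (T : nat) (P : nat -> Prop) :
  P (T - 1)%nat -> (forall t, (t + 1 < T)%nat -> P (t + 1)%nat -> P t) ->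
  forall t, (t < T)%nat -> P t.
Proof.
  intros hbase hstep.
  assert (hd : forall d t, (t + d = T - 1)%nat -> P t).
  { induction d as [|d IH]; intros t ht.
    - now replace t with (T - 1)%nat by lia.
    - apply hstep; [lia|]. apply IH. lia. }
  intros t ht. apply (hd (T - 1 - t)%nat). lia.
Qed.

Lemma zg_le (theta : R) (a b : Z) : 0 < theta -> (a <= b)%Z -> zg theta a <= zg theta b.
Proof.
  intros htheta hab. unfold zg.
  apply Rmult_le_compat_r; [lra|]. now apply IZR_le.
Qed.

Lemma grid_cell_exists (theta a : R) :
  0 < theta -> exists n, zg theta (n - 1) <= a < zg theta n.
Proof.
  intros htheta. destruct (archimed (a / theta)) as [hup hup'].
  exists (up (a / theta)). unfold zg. rewrite minus_IZR. change (IZR 1) with 1.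
  assert (ha : a = a / theta * theta) by (field; lra).
  split.
  - rewrite ha at 2. apply Rmult_le_compat_r; lra.
  - rewrite ha at 1. apply Rmult_lt_compat_r; lra.
Qed.

Lemma grid_cell_index_mono (theta a a' : R) (n n' : Z) : 0 < theta ->
  zg theta (n - 1) <= a < zg theta n -> zg theta (n' - 1) <= a' < zg theta n' ->
  a <= a' -> (n <= n')%Z.
Proof.
  intros htheta [ha _] [_ ha'] haa'.
  destruct (Z_le_gt_dec n n') as [|hgt]; [assumption|].
  assert (zg theta n' <= zg theta (n - 1)) by (apply zg_le; [lra|lia]). lra.
Qed.

Lemma fprob_nonneg (theta : R) (F : R -> R) (n : Z) : 0 < theta ->
  (forall x y, x <= y -> F x <= F y) -> 0 <= fprob theta F n.
Proof.
  intros htheta hF. unfold fprob.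
  assert (F (zg theta n) <= F (zg theta (n + 1))) by (apply hF, zg_le; [lra|lia]). lra.
Qed.

Lemma partial_sum_mono (a b : nat -> R) (N M : nat) :
  (forall k, 0 <= a k <= b k) -> (N <= M)%nat ->
  0 <= sum_f_R0 a N <= sum_f_R0 b M.
Proof.
  intros hab hNM. split.
  - apply cond_pos_sum. intro k. apply hab.
  - induction hNM as [|M hNM IH].
    + apply sum_Rle. intros k _. apply hab.
    + rewrite tech5. destruct (hab (S M)). lra.
Qed.

Lemma Series_mono (a b : nat -> R) : ex_series a -> ex_series b ->
  (forall n, a n <= b n) -> Series a <= Series b.
Proof.
  intros ha hb hab.
  assert (hdiff : 0 <= Series (fun n => b n - a n)).
  { assert (hzero : Series (fun _ : nat => 0) = 0).
    { rewrite (Series_ext _ (fun n => 0 * a n)) by (intro; ring).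
      rewrite Series_scal_l. ring. }
    rewrite <- hzero. apply Series_le; [intro n; specialize (hab n); lra|].
    exact (ex_series_minus b a hb ha). }
  rewrite Series_minus in hdiff by assumption. lra.
Qed.

Lemma grid_expectation_mono (theta : R) (F : R -> R) (g : R -> R) :
  (forall n, 0 <= fprob theta F n) -> nondecreasing g ->
  (forall x, ex_series (gsum_seq theta F (fun n => g (x - zg theta n)))) ->
  nondecreasing (fun x => Series (gsum_seq theta F (fun n => g (x - zg theta n)))).
Proof.
  intros hf hg hcv x y hxy. apply Series_mono; try apply hcv.
  intro k. unfold gsum_seq. apply Rmult_le_compat_r; [apply hf|]. apply hg. lra.
Qed.

Section Estimates.

Variables (theta alpha gam s1 : R) (F : R -> R).
Hypotheses (htheta : 0 < theta) (halpha : 0 <= alpha) (hgam : 0 <= gam)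
  (hf : forall n, 0 <= fprob theta F n).

Lemma grid_partial_sum_mono (phi1 : R -> R -> R) (x x' y y' : R) (N N' : nat) :
  mono2_nonneg phi1 -> 0 <= x <= x' -> y <= y' -> (N <= N')%nat ->
  0 <= sum_f_R0 (gsum_seq theta F (fun n => phi1 x (y - zg theta n))) N
    <= sum_f_R0 (gsum_seq theta F (fun n => phi1 x' (y' - zg theta n))) N'.
Proof.
  intros hphi hx hy hN. apply partial_sum_mono; [|assumption].
  intro k. unfold gsum_seq.
  destruct (hphi x x' (y - zg theta (Z.of_nat k - 1)) (y' - zg theta (Z.of_nat k - 1)) hx
              ltac:(lra)).
  split; [apply Rmult_le_pos; auto|]. apply Rmult_le_compat_r; auto.
Qed.

Lemma psi_mono_of_phi (phi1 psi0 : R -> R -> R) :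
  mono2_nonneg phi1 ->
  (forall x y, y < s1 - theta -> psi0 x y = gam * x) ->
  (forall x y n, s1 - theta <= y -> zg theta (n - 1) <= y - s1 < zg theta n ->
     psi0 x y = gam * x + alpha *
       sum_f_R0 (gsum_seq theta F (fun m => phi1 x (y - zg theta m))) (Z.to_nat n)) ->
  mono2_nonneg psi0.
Proof.
  intros hphi hlow hhigh x x' y y' hx hy.
  assert (hlin : 0 <= gam * x <= gam * x').
  { split; [apply Rmult_le_pos|apply Rmult_le_compat_l]; lra. }
  destruct (Rlt_le_dec y' (s1 - theta)) as [hy'|hy'].
  { rewrite (hlow x y), (hlow x' y'); lra. }
  destruct (grid_cell_exists theta (y' - s1) htheta) as [n' hn'].
  rewrite (hhigh x' y' n') by assumption.
  destruct (Rlt_le_dec y (s1 - theta)) as [hyl|hyl].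
  - rewrite (hlow x y) by assumption.
    destruct (grid_partial_sum_mono phi1 x' x' y' y' (Z.to_nat n') (Z.to_nat n') hphi
                ltac:(lra) (Rle_refl _) (le_n _)) as [hsum _].
    assert (0 <= alpha * sum_f_R0 (gsum_seq theta F (fun m => phi1 x' (y' - zg theta m)))
                           (Z.to_nat n')) by (apply Rmult_le_pos; lra).
    lra.
  - destruct (grid_cell_exists theta (y - s1) htheta) as [n hn].
    rewrite (hhigh x y n) by assumption.
    assert (hnn : (n <= n')%Z)
      by (apply (grid_cell_index_mono theta (y - s1) (y' - s1)); auto; lra).
    destruct (grid_partial_sum_mono phi1 x x' y y' (Z.to_nat n) (Z.to_nat n') hphi hx hy
                ltac:(lia)) as [hsum hsum'].
    split.
    + assert (0 <= alpha * sum_f_R0 (gsum_seq theta F (fun m => phi1 x (y - zg theta m)))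
                             (Z.to_nat n)) by (apply Rmult_le_pos; lra).
      lra.
    + apply Rplus_le_compat; [lra|]. now apply Rmult_le_compat_l.
Qed.

End Estimates.

(* Step psi_t -> phi_t: phi vanishes below s and equals psi with the first
   argument clipped to min(x, y - s) above, so it inherits monotonicity. *)
Lemma phi_mono_of_psi (s0 : R) (psi0 phi0 : R -> R -> R) :
  mono2_nonneg psi0 ->
  (forall x y, y < s0 -> phi0 x y = 0) ->
  (forall x y, s0 <= y -> y - x < s0 -> phi0 x y = psi0 (y - s0) y) ->
  (forall x y, s0 <= y -> s0 <= y - x -> phi0 x y = psi0 x y) ->
  mono2_nonneg phi0.
Proof.
  intros hpsi hlow hclip hfull.
  assert (hmin : forall x y, s0 <= y -> phi0 x y = psi0 (Rmin x (y - s0)) y).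
  { intros x y hy. destruct (Rlt_le_dec (y - x) s0).
    - rewrite Rmin_right by lra. auto.
    - rewrite Rmin_left by lra. auto. }
  intros x x' y y' hx hy.
  destruct (Rlt_le_dec y' s0) as [hy'|hy'].
  { rewrite (hlow x y), (hlow x' y'); lra. }
  rewrite (hmin x' y') by assumption.
  assert (hm' : 0 <= Rmin x' (y' - s0)) by (apply Rmin_glb; lra).
  destruct (Rlt_le_dec y s0) as [hyl|hyl].
  - rewrite (hlow x y) by assumption. split; [lra|].
    exact (proj1 (hpsi _ _ y' y' (conj hm' (Rle_refl _)) (Rle_refl _))).
  - rewrite (hmin x y) by assumption. apply hpsi; [|assumption].
    split; [apply Rmin_glb; lra|].
    apply Rle_trans with (Rmin x' (y - s0));
      [apply Rle_min_compat_r|apply Rle_min_compat_l]; lra.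
Qed.

Lemma cutoff_linear_mono (s0 gam : R) (phi0 : R -> R -> R) : 0 <= gam ->
  (forall x y, (y < s0 -> phi0 x y = 0) /\ (s0 <= y -> phi0 x y = gam * x)) ->
  mono2_nonneg phi0.
Proof.
  intros hgam hphi x x' y y' hx hy.
  destruct (hphi x y) as [hl hh]. destruct (hphi x' y') as [hl' hh'].
  assert (0 <= gam * x <= gam * x').
  { split; [apply Rmult_le_pos|apply Rmult_le_compat_l]; lra. }
  destruct (Rlt_le_dec y' s0); [rewrite hl, hl'; lra|].
  destruct (Rlt_le_dec y s0); [rewrite hl, hh'; lra|].
  rewrite hh, hh'; lra.
Qed.

Lemma omega_mono_step (theta alpha cst : R) (F : R -> R) (p ob om : R -> R) :
  0 <= alpha -> (forall n, 0 <= fprob theta F n) ->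
  nondecreasing p -> nondecreasing ob ->
  (forall x, ex_series (gsum_seq theta F (fun n => ob (x - zg theta n)))) ->
  (forall x, om x = p x - cst + alpha * Series (gsum_seq theta F (fun n => ob (x - zg theta n)))) ->
  nondecreasing om.
Proof.
  intros halpha hf hp hob hcv hom x y hxy. rewrite (hom x), (hom y).
  assert (hE := grid_expectation_mono theta F ob hf hob hcv x y hxy). simpl in hE.
  assert (hp' := hp x y hxy).
  apply Rplus_le_compat; [lra|]. now apply Rmult_le_compat_l.
Qed.

Lemma omegab_mono_step (a eta : R) (om ob : R -> R) :
  nondecreasing om ->
  (forall x, (x <= a -> ob x = eta) /\ (a < x -> ob x = Rmax eta (om x))) ->
  nondecreasing ob.
Proof.
  intros hom hob x y hxy.
  destruct (hob x) as [hl hh]. destruct (hob y) as [hl' hh'].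
  destruct (Rle_lt_dec y a); [rewrite hl, hl'; lra|].
  rewrite hh' by assumption.
  destruct (Rle_lt_dec x a); [rewrite hl by assumption; apply Rmax_l|].
  rewrite hh by assumption. apply Rle_max_compat_l, hom, hxy.
Qed.

Theorem lemma4p6
  (T : nat) (alpha theta : R) (c : nat -> R) (K : nat -> R)
  (G : nat -> R -> R) (F : nat -> R -> R) (ED : nat -> R) (gamma : nat -> R)
  (Cm SU s S I Ibar : nat -> R) (H V : nat -> R -> R)
  (psi phi psib phib : nat -> R -> R -> R)
  (omega omegab : nat -> R -> R) (eta : nat -> R)
  (* model *)
  (hT : (2 <= T)%nat)
  (halpha : 0 < alpha <= 1)
  (htheta : 0 < theta)
  (hK : forall t, (t < T)%nat -> 0 <= K t)
  (hF : forall t, (t < T)%nat -> is_cdf_nonneg (F t))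
  (hED : forall t, (t < T)%nat ->
     is_RInt_gen (fun x => 1 - F t x) (at_point 0) (Rbar_locally p_infty) (ED t))
  (* standing assumptions *)
  (hconv : forall t, (t < T)%nat -> convex_fun (Cfun alpha c G ED t))
  (hcoerp : forall t, (t < T)%nat -> is_lim (Cfun alpha c G ED t) p_infty p_infty)
  (hcoerm : forall t, (t < T)%nat -> is_lim (Cfun alpha c G ED t) m_infty p_infty)
  (hKdec : forall t, (t + 1 < T)%nat -> K t >= alpha * K (t + 1)%nat)
  (hgamma : forall t, (t < T)%nat -> 0 <= gamma t)
  (hlip : forall t, (t < T)%nat -> forall x y,
     Rabs (Cfun alpha c G ED t x - Cfun alpha c G ED t y) <= gamma t * Rabs (x - y))
  (* grid construction *)
  (hCm : forall t, (t < T)%nat ->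
     is_least (fun y => forall x, Cfun alpha c G ED t y <= Cfun alpha c G ED t x) (Cm t))
  (hSU : forall t (n0 : Z), (t < T)%nat ->
     zg theta n0 < Cm t <= zg theta (n0 + 1) ->
     is_least (fun z => on_grid theta z /\ Cm t <= z /\
        Cfun alpha c G ED t z > Cfun alpha c G ED t (zg theta n0) + K t) (SU t))
  (hsT : s (T - 1)%nat <= Cm (T - 1)%nat /\
     Cfun alpha c G ED (T - 1)%nat (s (T - 1)%nat)
       = Cfun alpha c G ED (T - 1)%nat (Cm (T - 1)%nat) + K (T - 1)%nat)
  (hIbarT : Ibar (T - 1)%nat = s (T - 1)%nat)
  (hI : forall t, (t + 1 < T)%nat ->
     is_greatest (fun z => on_grid theta z /\ z < Rmin (Ibar (t + 1)%nat - theta) (Cm t)) (I t))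
  (hIbar : forall t, (t + 1 < T)%nat ->
     is_greatest (fun z => on_grid theta z /\ z <= I t /\
        Cfun alpha c G ED t z > Cfun alpha c G ED t (I t) + K t) (Ibar t - theta))
  (hHT : forall y, H (T - 1)%nat y = Cfun alpha c G ED (T - 1)%nat y)
  (hST : S (T - 1)%nat = Cm (T - 1)%nat)
  (hV : forall t y, (t < T)%nat ->
     (y < s t -> V t y = H t (S t) + K t) /\ (s t <= y -> V t y = H t y))
  (hHcv : forall t y, (t + 1 < T)%nat ->
     ex_series (gsum_seq theta (F t) (fun n => V (t + 1)%nat (y - zg theta n))))
  (hH : forall t y, (t + 1 < T)%nat ->
     H t y = Cfun alpha c G ED t y
             + alpha * Series (gsum_seq theta (F t) (fun n => V (t + 1)%nat (y - zg theta n))))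
  (hS : forall t, (t + 1 < T)%nat ->
     is_greatest (fun z => on_grid theta z /\ I t <= z <= SU t /\
        forall w, on_grid theta w -> I t <= w <= SU t -> H t z <= H t w) (S t))
  (hs0 : forall t, (t + 1 < T)%nat -> K t = 0 -> s t = S t)
  (hs : forall t, (t + 1 < T)%nat -> K t <> 0 ->
     is_least (fun z => on_grid theta z /\ Ibar t <= z <= S t /\
        H t z <= H t (S t) + K t) (s t))
  (* estimate functions *)
  (hpsiT : forall x y, psi (T - 1)%nat x y = gamma (T - 1)%nat * x)
  (hpsibT : forall x y, psib (T - 1)%nat x y = gamma (T - 1)%nat * x)
  (hphiT : forall x y, (y < s (T - 1)%nat -> phi (T - 1)%nat x y = 0) /\
     (s (T - 1)%nat <= y -> phi (T - 1)%nat x y = gamma (T - 1)%nat * x))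
  (hphibT : forall x y, (y < s (T - 1)%nat -> phib (T - 1)%nat x y = 0) /\
     (s (T - 1)%nat <= y -> phib (T - 1)%nat x y = gamma (T - 1)%nat * x))
  (hpsi0 : forall t x y, (t + 1 < T)%nat -> y < s (t + 1)%nat - theta ->
     psi t x y = gamma t * x)
  (hpsi1 : forall t x y (n : Z), (t + 1 < T)%nat -> s (t + 1)%nat - theta <= y ->
     zg theta (n - 1) <= y - s (t + 1)%nat < zg theta n ->
     psi t x y = gamma t * x + alpha *
       sum_f_R0 (fun k => phi (t + 1)%nat x (y - zg theta (Z.of_nat k - 1))
                          * fprob theta (F t) (Z.of_nat k - 1)) (Z.to_nat n))
  (hpsib0 : forall t x y, (t + 1 < T)%nat -> y < s (t + 1)%nat - theta ->
     psib t x y = gamma t * x)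
  (hpsib1 : forall t x y (n : Z), (t + 1 < T)%nat -> s (t + 1)%nat - theta <= y ->
     zg theta (n - 1) <= y - s (t + 1)%nat < zg theta n ->
     psib t x y = gamma t * x + alpha *
       sum_f_R0 (fun k => phib (t + 1)%nat x (y - zg theta (Z.of_nat k - 1))
                          * fprob theta (F t) (Z.of_nat k - 1)) (Z.to_nat n))
  (hphi : forall t x y, (t + 1 < T)%nat ->
     (y < s t -> phi t x y = 0) /\
     (s t <= y -> y - x < s t -> phi t x y = psi t (y - s t) y) /\
     (s t <= y -> s t <= y - x -> phi t x y = psi t x y))
  (hphib : forall t x y, (t + 1 < T)%nat ->
     (y < s t -> phib t x y = 0) /\
     (s t <= y -> y - x < s t -> phib t x y = psib t (y - s t + theta) y) /\
     (s t <= y -> s t <= y - x -> phib t x y = psib t x y))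
  (* error-bound functions *)
  (homT : forall x, omega (T - 1)%nat x = 0)
  (hombT : forall x, omegab (T - 1)%nat x = 0)
  (hetaT : eta (T - 1)%nat = 0)
  (homcv : forall t x, (t + 1 < T)%nat ->
     ex_series (gsum_seq theta (F t) (fun n => omegab (t + 1)%nat (x - zg theta n))))
  (hom : forall t x, (t + 1 < T)%nat ->
     omega t x = psi t theta x - gamma t * theta
       + alpha * Series (gsum_seq theta (F t) (fun n => omegab (t + 1)%nat (x - zg theta n))))
  (heta : forall t, (t + 1 < T)%nat -> eta t = psib t theta (SU t) + omega t (SU t))
  (homb : forall t x, (t + 1 < T)%nat ->
     (x <= SU t -> omegab t x = eta t) /\
     (SU t < x -> omegab t x = Rmax (eta t) (omega t x)))
  : forall t, (t < T)%nat ->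
      (forall x y, x <= y -> omega t x <= omega t y) /\
      (forall x y, x <= y -> omegab t x <= omegab t y).
Proof.
  assert (hf : forall t, (t < T)%nat -> forall n, 0 <= fprob theta (F t) n)
    by (intros t ht n; apply fprob_nonneg; [assumption|apply (hF t ht)]).
  assert (hpsi_step : forall t, (t + 1 < T)%nat -> mono2_nonneg (phi (t + 1)%nat) ->
                        mono2_nonneg (psi t)).
  { intros t ht hphi1.
    apply (psi_mono_of_phi theta alpha (gamma t) (s (t + 1)%nat) (F t) htheta
             ltac:(lra) (hgamma t ltac:(lia)) (hf t ltac:(lia)) (phi (t + 1)%nat) (psi t) hphi1).
    - intros x y hy. exact (hpsi0 t x y ht hy).
    - intros x y n hy hn. exact (hpsi1 t x y n ht hy hn). }
  assert (hphi_mono : forall t, (t < T)%nat -> mono2_nonneg (phi t)).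
  { apply backward_induction.
    - exact (cutoff_linear_mono _ _ _ (hgamma (T - 1)%nat ltac:(lia)) hphiT).
    - intros t ht hphi1.
      apply (phi_mono_of_psi (s t) (psi t)).
      + now apply hpsi_step.
      + intros x y. exact (proj1 (hphi t x y ht)).
      + intros x y. exact (proj1 (proj2 (hphi t x y ht))).
      + intros x y. exact (proj2 (proj2 (hphi t x y ht))). }
  apply backward_induction.
  - split; intros x y _; rewrite ?homT, ?hombT; lra.
  - intros t ht [_ hob1].
    assert (hpsi_theta : nondecreasing (psi t theta)).
    { intros x y hxy.
      exact (proj2 (hpsi_step t ht (hphi_mono (t + 1)%nat ht) theta theta x y
                      ltac:(lra) hxy)). }
    assert (hom_t : nondecreasing (omega t)).
    { apply (omega_mono_step theta alpha (gamma t * theta) (F t) (psi t theta)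
               (omegab (t + 1)%nat) (omega t) ltac:(lra) (hf t ltac:(lia)) hpsi_theta hob1).
      - intro x. exact (homcv t x ht).
      - intro x. exact (hom t x ht). }
    split; [exact hom_t|].
    exact (omegab_mono_step (SU t) (eta t) (omega t) (omegab t) hom_t (fun x => homb t x ht)).
Qed.
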